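(* Let $X,Y$ be real Hilbert spaces and $A\colon X\to Y$ compact linear with singular system $(\sigma_i,u_i,v_i)_{i\ge1}$, $\sigma_i>0$. Let $N\ge1$ and $x^\dagger=\sum_{i=1}^N c_iv_i$ with $c_i=\langle x^\dagger,v_i\rangle\neq0$ for $i=1,\dots,N$. Let $y^\delta=Ax^\dagger+\eta$ where $\eta$ is a $Y$-valued random variable such that the coefficients $\eta_i=\langle\eta,u_i\rangle$ satisfy $\mathbb E[\eta_i]=0$ and $\mathbb E[\eta_i^2]=\beta_{\eta,i}^2<\infty$ for all $i$. For $M\in\mathbb N$ let $E_M=T^{(M)}_\alpha y^\delta-x^\dagger$. If $\alpha>0$ satisfies $$2\alpha\ge\max\Big\{0,\ \max_{0\le m<N}\Big(\frac{\beta_{\eta,m+1}^2}{c_{m+1}^2}-\sigma_{m+1}^2\Big)\Big\},$$ then $\mathbb E\big[\|E_N\|^2\big]\le\mathbb E\big[\|E_M\|^2\big]$ for all $M\in\mathbb N$.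
   Context: The singular system means $Ax=\sum_i\sigma_i\langle x,v_i\rangle u_i$ with $(v_i)$, $(u_i)$ orthonormal families. The truncated Tikhonov regularization is $T^{(M)}_\alpha y=\sum_{i=1}^M\frac{\sigma_i}{\sigma_i^2+\alpha}\langle y,u_i\rangle v_i$ (for $M=0$ the empty sum, i.e. $T^{(0)}_\alpha=0$). *)

From HB Require Import structures.
From mathcomp Require Import all_boot all_order all_algebra.
From mathcomp Require Import all_classical all_reals all_analysis.
Set Implicit Arguments. Unset Strict Implicit. Unset Printing Implicit Defensive.
Import Order.TTheory GRing.Theory Num.Theory.
Import numFieldNormedType.Exports.
Local Open Scope classical_set_scope.
Local Open Scope ring_scope.

(* [ip] is an inner product on the real normed space X inducing its norm.
   Together with X being a completeNormedModType this makes X a real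
   Hilbert space. *)
Definition inner_product (R : realType) (X : normedModType R)
  (ip : X -> X -> R) : Prop :=
  [/\ forall x y : X, ip x y = ip y x,
      forall (a : R) (x y z : X), ip (a *: x + y) z = a * ip x z + ip y z
    & forall x : X, `|x| = Num.sqrt (ip x x)].

Definition orthonormal (R : realType) (X : normedModType R)
  (ip : X -> X -> R) (v : nat -> X) : Prop :=
  forall i j : nat, ip (v i) (v j) = (i == j)%:R.

Definition compact_operator (R : realType) (X Y : normedModType R)
  (A : X -> Y) : Prop :=
  compact (closure (A @` [set x : X | `|x| <= 1])).

(* singular system (sigma_i, u_i, v_i)_{i>=1}, indexed here by i : nat from 0
   (index i here stands for i+1 of the paper):
   A x = sum_i sigma_i <x, v_i> u_i (norm-convergent series in Y). *)
Definition singular_system (R : realType) (X Y : normedModType R)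
  (ipX : X -> X -> R) (ipY : Y -> Y -> R) (A : X -> Y)
  (sigma : nat -> R) (u : nat -> Y) (v : nat -> X) : Prop :=
  [/\ orthonormal ipX v, orthonormal ipY u, (forall i, 0 < sigma i)
    & forall x : X,
        (fun n : nat => \sum_(i < n) (sigma i * ipX x (v i)) *: u i) @ \oo
          --> A x].

Definition trunc_tikhonov (R : realType) (X Y : normedModType R)
  (ipY : Y -> Y -> R) (sigma : nat -> R) (u : nat -> Y) (v : nat -> X)
  (M : nat) (alpha : R) (y : Y) : X :=
  \sum_(i < M) (sigma i / (sigma i ^+ 2 + alpha) * ipY y (u i)) *: v i.

(* Expand the error E_M in the orthonormal family (v_i): its i-th coefficient is
   t_i (sigma_i c_i + eta_i) - c_i when i < M and -c_i otherwise, where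
   t_i = sigma_i / (sigma_i^2 + alpha) and c_i = 0 for i >= N.  Since the eta_i
   are centered with second moment beta_i^2, E ||E_M||^2 is a sum over i of a
   per-index risk that depends only on whether i < M.  Dropping an index i >= N
   costs nothing, while for i < N the noise condition
   beta_i^2 <= (sigma_i^2 + 2 alpha) c_i^2 makes keeping it at least as good as
   dropping it; hence the truncation level M = N minimizes every term. *)
From Pilot Require Import Defs.
From HB Require Import structures.
From mathcomp Require Import all_boot all_order all_algebra.
From mathcomp Require Import all_classical all_reals all_analysis.
From mathcomp Require Import measurable_realfun ring lra.
Import Order.TTheory GRing.Theory Num.Theory.
Import numFieldNormedType.Exports.
Local Open Scope classical_set_scope.
Local Open Scope ring_scope.

Set Implicit Arguments.
Unset Strict Implicit.

Section CenteredSecondMoment.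
Variables (R : realType) (d : measure_display) (T : measurableType d).
Variables (P : probability T R) (e : T -> R) (b : R).
Hypothesis e_mea : measurable_fun setT e.
Hypothesis e_centered : (\int[P]_w (e w)%:E = 0)%E.
Hypothesis e_second_moment : (\int[P]_w ((e w) ^+ 2)%:E = (b ^+ 2)%:E)%E.

Let integrable_cst (k : R) : P.-integrable setT (fun=> k%:E).
Proof. exact: (finite_measure_integrable_cst _ k measurableT). Qed.

Let integrable_sqr : P.-integrable setT (fun w => ((e w) ^+ 2)%:E).
Proof.
apply/integrableP; split; first exact/measurable_EFinP/measurable_funX.
under eq_integral do rewrite /= ger0_norm ?sqr_ge0//.
by rewrite e_second_moment ltry.
Qed.

(* |e| <= 1 + e^2 *)
Let integrable_centered : P.-integrable setT (fun w => (e w)%:E).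
Proof.
apply: (le_integrable measurableT _ _ (integrableD measurableT
  (integrable_cst 1) integrable_sqr)); first exact/measurable_EFinP.
move=> w _ /=; rewrite lee_fin [`|1 + _|]ger0_norm ?addr_ge0 ?sqr_ge0//.
have norm_ge0 := normr_ge0 (e w); have shifted_sqr_ge0 := sqr_ge0 (`|e w| - 1).
rewrite -[e w ^+ 2]real_normK ?num_real//; nra.
Qed.

Let sqr_affine_expand (p q : R) :
  (fun w => ((p + q * e w) ^+ 2)%:E) =
  (fun w => (p ^+ 2)%:E + ((2 * p * q)%:E * (e w)%:E
                           + (q ^+ 2)%:E * ((e w) ^+ 2)%:E))%E.
Proof. by apply: funext => w; rewrite -!EFinM -!EFinD; congr EFin; ring. Qed.

Lemma integrable_sqr_affine (p q : R) :
  P.-integrable setT (fun w => ((p + q * e w) ^+ 2)%:E).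
Proof.
rewrite sqr_affine_expand.
by apply: integrableD => //; apply: integrableD => //; exact: integrableZl.
Qed.

Lemma integral_sqr_affine (p q : R) :
  (\int[P]_w ((p + q * e w) ^+ 2)%:E = (p ^+ 2 + q ^+ 2 * b ^+ 2)%:E)%E.
Proof.
rewrite sqr_affine_expand integralD //; last first.
  by apply: integrableD => //; exact: integrableZl.
rewrite integralD //; try exact: integrableZl.
rewrite !integralZl // e_centered e_second_moment integral_cst //.
rewrite [X in (_ * X + _)%E](_ : _ = 1%E); last exact: probability_setT.
by rewrite mule1 mule0 add0e -EFinM -EFinD.
Qed.

End CenteredSecondMoment.

Section InnerProduct.
Variables (R : realType) (X : normedModType R) (ip : X -> X -> R).
Hypothesis ip_inner : inner_product ip.

Lemma ip0l z : ip 0 z = 0.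
Proof.
case: ip_inner => _ ipDZ _; have := ipDZ 1 0 0 z.
rewrite scale1r addr0 mul1r; lra.
Qed.

Lemma ipDl x y z : ip (x + y) z = ip x z + ip y z.
Proof. by case: ip_inner => _ ipDZ _; rewrite -{1}[x]scale1r ipDZ mul1r. Qed.

Lemma ipZl a x z : ip (a *: x) z = a * ip x z.
Proof. by case: ip_inner => _ ipDZ _; rewrite -[a *: x]addr0 ipDZ ip0l addr0. Qed.

Lemma ip_suml (I : Type) (s : seq I) (F : I -> X) z :
  ip (\sum_(i <- s) F i) z = \sum_(i <- s) ip (F i) z.
Proof.
elim: s => [|a s IH]; first by rewrite !big_nil ip0l.
by rewrite !big_cons ipDl IH.
Qed.

Lemma ip_normK x : ip x x = `|x| ^+ 2.
Proof.
case: ip_inner => _ _ ipN; rewrite ipN sqr_sqrtr //.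
rewrite leNgt; apply/negP => ip_lt0.
have /normr0_eq0 x0 : `|x| = 0 by rewrite ipN ler0_sqrtr // ltW.
by move: ip_lt0; rewrite x0 ip0l ltxx.
Qed.

Variable (v : nat -> X).
Hypothesis v_orthonormal : Defs.orthonormal ip v.

Lemma ip_orthonormal_sum K (a : nat -> R) j :
  ip (\sum_(i < K) a i *: v i) (v j) = if (j < K)%N then a j else 0.
Proof.
rewrite ip_suml; under eq_bigr do rewrite ipZl v_orthonormal.
case: ifP => [jK|jNK].
  rewrite (bigD1 (Ordinal jK)) //= eqxx mulr1 big1 ?addr0 // => i.
  by rewrite -val_eqE /= eq_sym => /negbTE ->; rewrite mulr0.
rewrite big1 // => i _; case: eqP => [ij|]; last by rewrite mulr0.
by move: jNK; rewrite -ij ltn_ord.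
Qed.

Lemma normr_orthonormal_sum K (a : nat -> R) :
  `|\sum_(i < K) a i *: v i| ^+ 2 = \sum_(i < K) a i ^+ 2.
Proof.
case: ip_inner => ipC _ _; rewrite -ip_normK ip_suml.
by apply: eq_bigr => i _; rewrite ipZl ipC ip_orthonormal_sum // ltn_ord expr2.
Qed.

End InnerProduct.

Lemma singular_system_image (R : realType) (X Y : normedModType R)
  (ipX : X -> X -> R) (ipY : Y -> Y -> R) (A : X -> Y)
  (sigma : nat -> R) (u : nat -> Y) (v : nat -> X) j :
  singular_system ipX ipY A sigma u v -> A (v j) = sigma j *: u j.
Proof.
case=> v_on _ _ A_series.
have partial_sums_cst : (fun n : nat =>
    \sum_(i < n) (sigma i * ipX (v j) (v i)) *: u i) @ \oo --> sigma j *: u j.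
  apply: cvg_near_cst; exists j.+1 => // n /= jn.
  rewrite (bigD1 (Ordinal jn)) //= v_on eqxx mulr1 big1 ?addr0 // => i.
  by rewrite -val_eqE /= v_on eq_sym => /negbTE ->; rewrite mulr0 scale0r.
exact: cvg_unique (A_series (v j)) partial_sums_cst.
Qed.

Section ComponentRisk.
Variable R : realFieldType.

Definition tikhonov_filter (s a : R) : R := s / (s ^+ 2 + a).

(* Mean squared error along one direction: the coefficient c, observed as
   s c plus centered noise of variance b^2, is either filtered or dropped. *)
Definition component_risk (keep : bool) (s a c b : R) : R :=
  if keep then (tikhonov_filter s a * (s * c) - c) ^+ 2
               + tikhonov_filter s a ^+ 2 * b ^+ 2
  else c ^+ 2.

Lemma component_risk_ge0 keep (s a c b : R) : 0 <= component_risk keep s a c b.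
Proof.
rewrite /component_risk; case: keep; last exact: sqr_ge0.
by apply: addr_ge0; [|apply: mulr_ge0]; exact: sqr_ge0.
Qed.

Lemma component_risk_keep_le (s a c b : R) : 0 < s -> 0 < a ->
  b ^+ 2 <= (s ^+ 2 + 2 * a) * c ^+ 2 ->
  component_risk true s a c b <= component_risk false s a c b.
Proof.
move=> s_gt0 a_gt0 b_le; rewrite /component_risk -subr_ge0.
have D_gt0 : 0 < s ^+ 2 + a by rewrite addr_gt0 // exprn_gt0.
have -> : c ^+ 2 - ((tikhonov_filter s a * (s * c) - c) ^+ 2
                     + tikhonov_filter s a ^+ 2 * b ^+ 2)
          = s ^+ 2 * ((s ^+ 2 + 2 * a) * c ^+ 2 - b ^+ 2) / (s ^+ 2 + a) ^+ 2.
  by rewrite /tikhonov_filter; field; rewrite gt_eqF.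
by rewrite divr_ge0 ?sqr_ge0 // mulr_ge0 ?sqr_ge0 // subr_ge0.
Qed.

Lemma component_risk_oracle_le (keep keep' : bool) (s a c b : R) :
  0 < s -> 0 < a ->
  (if keep then b ^+ 2 <= (s ^+ 2 + 2 * a) * c ^+ 2 else c == 0) ->
  component_risk keep s a c b <= component_risk keep' s a c b.
Proof.
case: keep => s_gt0 a_gt0 => [b_le|/eqP ->]; last first.
  by rewrite [X in X <= _]/component_risk expr0n /= component_risk_ge0.
by case: keep' => //; exact: component_risk_keep_le.
Qed.

End ComponentRisk.

Section ExpectedError.
Variables (R : realType) (X Y : normedModType R).
Variables (ipX : X -> X -> R) (ipY : Y -> Y -> R) (A : {linear X -> Y}).
Variables (sigma : nat -> R) (u : nat -> Y) (v : nat -> X).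
Hypotheses (ipX_inner : inner_product ipX) (ipY_inner : inner_product ipY).
Hypothesis A_singular : singular_system ipX ipY A sigma u v.
Variables (N : nat) (xdag : X).
Hypothesis xdag_span : xdag = \sum_(i < N) ipX xdag (v i) *: v i.

Definition signal_coef i := if (i < N)%N then ipX xdag (v i) else 0.

Lemma xdag_widen K : (N <= K)%N -> xdag = \sum_(i < K) signal_coef i *: v i.
Proof.
move=> NK; rewrite {1}xdag_span.
rewrite (big_ord_widen K (fun i => ipX xdag (v i) *: v i)) // big_mkcond.
by apply: eq_bigr => i _; rewrite /signal_coef; case: ifP; rewrite ?scale0r.
Qed.

Lemma ip_image_xdag i : ipY (A xdag) (u i) = sigma i * signal_coef i.
Proof.
have [_ u_on _ _] := A_singular.
rewrite (xdag_widen (leqnn N)) linear_sum.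
under eq_bigr do rewrite linearZ /= (singular_system_image _ A_singular) scalerA.
rewrite (ip_orthonormal_sum ipY_inner u_on _ (fun k => signal_coef k * sigma k)).
by rewrite mulrC /signal_coef; case: ifP => [->|]; rewrite ?mulr0.
Qed.

Variable alpha : R.

Definition tikhonov_error_coef M y i :=
  (if (i < M)%N then tikhonov_filter (sigma i) alpha * ipY y (u i) else 0)
  - signal_coef i.

Lemma trunc_tikhonov_error M K y : (maxn M N <= K)%N ->
  trunc_tikhonov ipY sigma u v M alpha y - xdag =
  \sum_(i < K) tikhonov_error_coef M y i *: v i.
Proof.
rewrite geq_max => /andP[MK NK]; rewrite (xdag_widen NK) /trunc_tikhonov.
rewrite (big_ord_widen K (fun i => (sigma i / (sigma i ^+ 2 + alpha)
                                    * ipY y (u i)) *: v i)) //.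
rewrite big_mkcond -sumrB; apply: eq_bigr => i _.
by rewrite /tikhonov_error_coef scalerBl; case: ifP; rewrite ?scale0r.
Qed.

Variables (d : measure_display) (T : measurableType d) (P : probability T R).
Variables (eta : T -> Y) (beta : nat -> R).
Hypothesis eta_mea : forall i, measurable_fun setT (fun w => ipY (eta w) (u i)).
Hypothesis eta_centered : forall i, (\int[P]_w (ipY (eta w) (u i))%:E = 0)%E.
Hypothesis eta_second_moment : forall i,
  (\int[P]_w ((ipY (eta w) (u i)) ^+ 2)%:E = (beta i ^+ 2)%:E)%E.

Lemma tikhonov_error_coef_affine M i w :
  tikhonov_error_coef M (A xdag + eta w) i =
  ((if (i < M)%N then tikhonov_filter (sigma i) alpha * (sigma i * signal_coef i)
    else 0) - signal_coef i)
  + (if (i < M)%N then tikhonov_filter (sigma i) alpha else 0) * ipY (eta w) (u i).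
Proof. by rewrite /tikhonov_error_coef ipDl // ip_image_xdag; case: ifP => _; ring. Qed.

Lemma expected_sq_error M K : (maxn M N <= K)%N ->
  (\int[P]_w (`| trunc_tikhonov ipY sigma u v M alpha (A xdag + eta w) - xdag | ^+ 2)%:E
   = (\sum_(i < K) component_risk (i < M)%N (sigma i) alpha (signal_coef i) (beta i))%:E)%E.
Proof.
move=> MNK; have [v_on _ _ _] := A_singular.
under eq_integral do rewrite (trunc_tikhonov_error _ MNK)
  (normr_orthonormal_sum ipX_inner v_on) -sumEFin.
under eq_integral do under eq_bigr do rewrite tikhonov_error_coef_affine.
rewrite integral_sum // => [|i]; last first.
  by have := integrable_sqr_affine (eta_mea i) (eta_second_moment i); apply.
rewrite -sumEFin; apply: eq_bigr => i _.
rewrite (integral_sqr_affine (eta_mea i) (eta_centered i) (eta_second_moment i)).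
by rewrite /component_risk; case: ifP => _; rewrite ?expr0n ?mul0r ?addr0 ?sub0r ?sqrrN.
Qed.

End ExpectedError.

Theorem theorem3 (R : realType)
  (X Y : completeNormedModType R) (ipX : X -> X -> R) (ipY : Y -> Y -> R)
  (A : {linear X -> Y}) (sigma : nat -> R) (u : nat -> Y) (v : nat -> X)
  (N : nat) (xdag : X)
  (d : measure_display) (T : measurableType d) (P : probability T R)
  (eta : T -> Y) (beta : nat -> R) (alpha : R) :
  inner_product ipX -> inner_product ipY ->
  compact_operator A ->
  singular_system ipX ipY A sigma u v ->
  (1 <= N)%N ->
  xdag = \sum_(i < N) ipX xdag (v i) *: v i ->
  (forall i : nat, (i < N)%N -> ipX xdag (v i) != 0) ->
  (forall i : nat, measurable_fun setT (fun w => ipY (eta w) (u i))) ->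
  (forall i : nat, (\int[P]_w (ipY (eta w) (u i))%:E = 0)%E) ->
  (forall i : nat, (\int[P]_w ((ipY (eta w) (u i)) ^+ 2)%:E = (beta i ^+ 2)%:E)%E) ->
  0 < alpha ->
  \big[Num.max/0]_(m < N)
      (beta m ^+ 2 / (ipX xdag (v m)) ^+ 2 - sigma m ^+ 2) <= 2 * alpha ->
  forall M : nat,
    (\int[P]_w (`| trunc_tikhonov ipY sigma u v N alpha (A xdag + eta w) - xdag | ^+ 2)%:E
     <= \int[P]_w (`| trunc_tikhonov ipY sigma u v M alpha (A xdag + eta w) - xdag | ^+ 2)%:E)%E.
Proof.
move=> ipX_inner ipY_inner _ A_singular _ xdag_span c_neq0 eta_mea eta_centered
  eta_second_moment alpha_gt0 noise_le M.
have [_ _ sigma_gt0 _] := A_singular.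
have expected := expected_sq_error ipX_inner ipY_inner A_singular xdag_span alpha
  eta_mea eta_centered eta_second_moment.
rewrite (@expected N (maxn M N)); last by rewrite maxnn leq_maxr.
rewrite (@expected M (maxn M N)) // lee_fin.
apply: ler_sum => i _.
apply: component_risk_oracle_le; [exact: sigma_gt0 | exact: alpha_gt0 |].
rewrite /signal_coef; case: ltnP => iN; last by rewrite eqxx.
have c2_gt0 : 0 < ipX xdag (v i) ^+ 2 by rewrite exprn_even_gt0 ?c_neq0.
have := le_trans (le_bigmax _ _ (Ordinal iN)) noise_le.
by rewrite /= lerBlDr -ler_pdivrMr // addrC.
Qed.
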